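(* Let $A$ be a hyperoperator on $\mathbb{R}^n$ on the complex Banach space $X$, let $f\in\mathcal{E}(\mathbb{R}^n,\mathbb{R}^m)$, and assume $f(a)x=0$ for all $x\in D_A$. Then $\sigma(A)\subset f^{-1}(0)$.
   Context: $X$ is a complex Banach space, $L(X)$ the bounded operators. $\mathcal{D}(\mathbb{R}^n)=C_c^\infty(\mathbb{R}^n)$ (complex-valued); $\mathcal{E}(\mathbb{R}^n,\mathbb{R}^m)$ the smooth maps $\mathbb{R}^n\to\mathbb{R}^m$. A hyperoperator on $\mathbb{R}^n$ is a linear map $A:\mathcal{D}(\mathbb{R}^n)\to L(X)$, continuous ($A(\phi_j)\to0$ in operator norm when $\phi_j\to0$ in $\mathcal{D}(\mathbb{R}^n)$), multiplicative, with (i) $D_A:=\bigcup_\phi\operatorname{Im}A(\phi)$ dense and (ii) $\bigcap_\phi\operatorname{Ker}A(\phi)=\{0\}$. For $x\in D_A$ written $x=A(\phi)y$, $f(a)x:=A(f\phi)y$ (well defined, componentwise). $\sigma(A)$ is the support of $A$ as an $L(X)$-valued distribution. *)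

From HB Require Import structures.
From mathcomp Require Import all_boot all_order all_algebra.
From mathcomp Require Import all_classical all_reals all_analysis.
From mathcomp.real_closed Require Import complex.
Set Implicit Arguments. Unset Strict Implicit. Unset Printing Implicit Defensive.
Import Order.TTheory GRing.Theory Num.Theory.
Import numFieldNormedType.Exports.
Local Open Scope classical_set_scope.
Local Open Scope ring_scope.
Local Open Scope complex_scope.

Section Hyper.
Variables (R : realType) (n : nat).

Definition ebase (i : 'I_n) : 'rV[R]_n := delta_mx 0 i.

Fixpoint dpart (s : seq 'I_n) (g : 'rV[R]_n -> R) : 'rV[R]_n -> R :=
  match s with
  | [::] => g
  | i :: s' => fun x => 'D_(ebase i) (dpart s' g) x
  end.

Definition smooth (g : 'rV[R]_n -> R) : Prop :=
  forall s : seq 'I_n,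
    continuous (dpart s g) /\
    forall (i : 'I_n) (x : 'rV[R]_n), derivable (dpart s g) x (ebase i).

Definition fsupp (phi : 'rV[R]_n -> R[i]) : set 'rV[R]_n :=
  closure [set x | phi x != 0].

Definition test_fun (phi : 'rV[R]_n -> R[i]) : Prop :=
  smooth (fun x => complex.Re (phi x)) /\ smooth (fun x => complex.Im (phi x)) /\
  compact (fsupp phi).

Definition D_cvg0 (phi : nat -> 'rV[R]_n -> R[i]) : Prop :=
  (forall j, test_fun (phi j)) /\
  (exists K : set 'rV[R]_n, compact K /\ forall j, fsupp (phi j) `<=` K) /\
  (forall (s : seq 'I_n) (e : R), 0 < e ->
     \forall j \near \oo, forall x : 'rV[R]_n,
        `|dpart s (fun y => complex.Re (phi j y)) x| < e /\
        `|dpart s (fun y => complex.Im (phi j y)) x| < e).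

Variable X : completeNormedModType R[i].

Definition bounded_op (T : X -> X) : Prop :=
  (forall (c : R[i]) (x y : X), T (c *: x + y) = c *: T x + T y) /\
  exists M : R, forall x, `|T x| <= M%:C * `|x|.

Definition hyperoperator (A : ('rV[R]_n -> R[i]) -> X -> X) : Prop :=
  (forall phi, test_fun phi -> bounded_op (A phi)) /\
  (forall (c : R[i]) phi psi, test_fun phi -> test_fun psi ->
     A (fun x => c * phi x + psi x) = (fun y => c *: A phi y + A psi y)) /\
  (forall phi : nat -> 'rV[R]_n -> R[i], D_cvg0 phi ->
     forall e : R, 0 < e ->
       \forall j \near \oo, forall y : X, `|A (phi j) y| <= e%:C * `|y|) /\
  (forall phi psi, test_fun phi -> test_fun psi ->
     A (fun x => phi x * psi x) = A phi \o A psi) /\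
  closure [set x : X | exists phi y, test_fun phi /\ x = A phi y] = setT /\
  (forall x : X, (forall phi, test_fun phi -> A phi x = 0) -> x = 0).

Definition DA (A : ('rV[R]_n -> R[i]) -> X -> X) : set X :=
  [set x | exists phi y, test_fun phi /\ x = A phi y].

(* sigma(A): support of A as an L(X)-valued distribution, i.e. the
   complement of the largest open set on which A vanishes *)
Definition hsupport (A : ('rV[R]_n -> R[i]) -> X -> X) : set 'rV[R]_n :=
  [set p | forall U : set 'rV[R]_n, open U -> U p ->
     exists phi, test_fun phi /\ fsupp phi `<=` U /\ exists y, A phi y != 0].

End Hyper.

Definition smooth_map (R : realType) (n m : nat)
  (f : 'rV[R]_n -> 'rV[R]_m) : Prop :=
  forall i : 'I_m, smooth (fun x => f x 0 i).

(* If p were in sigma(A) with f_j(p) <> 0 for some component f_j, then some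
   test function phi supported in the open set {f_j <> 0} would have
   A(phi) <> 0.  But phi / f_j is again a test function, and
   f_j (phi / f_j) = phi, so the hypothesis f(a)x = 0 gives A(phi) = 0. *)
From HB Require Import structures.
From mathcomp Require Import all_boot all_order all_algebra.
From mathcomp Require Import all_classical all_reals all_analysis.
From mathcomp.real_closed Require Import complex.
From mathcomp Require Import ring.
Set Implicit Arguments. Unset Strict Implicit. Unset Printing Implicit Defensive.
Import Order.TTheory GRing.Theory Num.Theory.
Import numFieldNormedType.Exports.
Local Open Scope classical_set_scope.
Local Open Scope ring_scope.

Section SmoothUpto.
Variables (R : realType) (n : nat).
Implicit Types (g u v : 'rV[R]_n -> R) (W V : set 'rV[R]_n).

Lemma dpart_cat s t g : dpart (s ++ t) g = dpart s (dpart t g).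
Proof. by elim: s => //= i s ->. Qed.

Lemma eq_dpart_on W g1 g2 : open W -> (forall x, W x -> g1 x = g2 x) ->
  forall s x, W x -> dpart s g1 x = dpart s g2 x.
Proof.
move=> oW g12; elim=> [|i s IH] x Wx //=; first exact: g12.
apply: near_eq_derive; apply: filterS (oW x Wx) => y Wy; exact: IH.
Qed.

Definition smooth_upto W (N : nat) g := forall s : seq 'I_n, (size s <= N)%N ->
  forall x, W x -> {for x, continuous (dpart s g)} /\
    forall i, derivable (dpart s g) x (ebase R i).

Lemma eq_smooth_upto W N g1 g2 : open W -> (forall x, W x -> g1 x = g2 x) ->
  smooth_upto W N g2 -> smooth_upto W N g1.
Proof.
move=> oW g12 g2N s hs x Wx.
have near_x : \forall y \near x, dpart s g2 y = dpart s g1 y.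
  by apply: filterS (oW x Wx) => y Wy; rewrite (eq_dpart_on oW g12).
have [cont der] := g2N s hs x Wx; split.
- rewrite /prop_for /continuous_at (eq_dpart_on oW g12 s Wx).
  exact: cvg_trans (near_eq_cvg near_x) cont.
- by move=> i; apply: near_eq_derivable near_x (der i).
Qed.

Lemma smooth_upto_le W M N g : (M <= N)%N -> smooth_upto W N g ->
  smooth_upto W M g.
Proof. by move=> MN gN s hs; apply: gN; apply: leq_trans hs MN. Qed.

Lemma smooth_upto_dpart W N g i : smooth_upto W N.+1 g ->
  smooth_upto W N (dpart [:: i] g).
Proof.
by move=> gN s hs; rewrite -dpart_cat cats1; apply: gN; rewrite size_rcons.
Qed.

Lemma smooth_uptoS W N g : smooth_upto W 0 g ->
  (forall i, smooth_upto W N (dpart [:: i] g)) -> smooth_upto W N.+1 g.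
Proof.
move=> g0 dgN; case/lastP => [|s i] hs; first exact: g0.
by rewrite -cats1 dpart_cat; apply: dgN; rewrite size_rcons in hs.
Qed.

Lemma smooth_upto_cst W N (c : R) : open W -> smooth_upto W N (cst c).
Proof.
move=> oW; elim: N c => [|N IH] c.
  case=> // _ x _; split; first exact: cst_continuous.
  by move=> i; apply: derivable_cst.
apply: smooth_uptoS; first exact: smooth_upto_le (leq0n N) (IH c).
move=> i; apply: (@eq_smooth_upto _ _ _ (cst 0)) => // x _ /=.
exact: derive_cst.
Qed.

Lemma smooth_uptoD W N u v : open W ->
  smooth_upto W N u -> smooth_upto W N v -> smooth_upto W N (u + v).
Proof.
move=> oW; elim: N u v => [|N IH] u v uN vN.
  case=> // _ x Wx; have [cu du] := uN [::] isT x Wx.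
  have [cv dv] := vN [::] isT x Wx; split; first exact: cvgD cu cv.
  by move=> i; apply: derivableD.
have uN' := smooth_upto_le (leqnSn N) uN.
have vN' := smooth_upto_le (leqnSn N) vN.
apply: smooth_uptoS; first exact: smooth_upto_le (leq0n N) (IH _ _ uN' vN').
move=> i; apply: (@eq_smooth_upto _ _ _ (dpart [:: i] u + dpart [:: i] v)).
- done.
- move=> x Wx /=; rewrite deriveD //.
  + exact: (uN [::] isT x Wx).2.
  + exact: (vN [::] isT x Wx).2.
- by apply: IH; apply: smooth_upto_dpart.
Qed.

Lemma smooth_uptoM W N u v : open W ->
  smooth_upto W N u -> smooth_upto W N v -> smooth_upto W N (u * v).
Proof.
move=> oW; elim: N u v => [|N IH] u v uN vN.
  case=> // _ x Wx; have [cu du] := uN [::] isT x Wx.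
  have [cv dv] := vN [::] isT x Wx; split; first exact: cvgM cu cv.
  by move=> i; apply: derivableM.
have uN' := smooth_upto_le (leqnSn N) uN.
have vN' := smooth_upto_le (leqnSn N) vN.
apply: smooth_uptoS; first exact: smooth_upto_le (leq0n N) (IH _ _ uN' vN').
move=> i; apply: (@eq_smooth_upto _ _ _
   (u * dpart [:: i] v + v * dpart [:: i] u)).
- done.
- move=> x Wx /=; rewrite deriveM //.
  + exact: (uN [::] isT x Wx).2.
  + exact: (vN [::] isT x Wx).2.
- by apply: smooth_uptoD => //; apply: IH => //; apply: smooth_upto_dpart.
Qed.

Lemma smooth_uptoV W N h : open W -> (forall N, smooth_upto W N h) ->
  (forall x, W x -> h x != 0) -> smooth_upto W N (fun x => (h x)^-1).
Proof.
move=> oW hN h0; elim: N => [|N IH].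
  case=> // _ x Wx; have [ch dh] := hN 0%N [::] isT x Wx; split.
  - exact: cvgV (h0 x Wx) ch.
  - by move=> i; apply: derivableV (h0 x Wx) (dh i).
apply: smooth_uptoS; first exact: smooth_upto_le (leq0n N) IH.
pose hV := fun x => (h x)^-1.
move=> i.
apply: (@eq_smooth_upto _ _ _ (cst (-1) * (dpart [:: i] h * (hV * hV)))).
- done.
- move=> x Wx /=; rewrite deriveV ?h0 //.
    by rewrite /hV -exprVn expr2 !fctE -[_ *: _]/(_ * _); ring.
  exact: (hN 0%N [::] isT x Wx).2.
- apply: smooth_uptoM => //; first exact: smooth_upto_cst.
  by apply: smooth_uptoM => //; [apply: smooth_upto_dpart | apply: smooth_uptoM].
Qed.

Lemma smooth_upto_cover W V N g : (forall x, W x \/ V x) ->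
  smooth_upto W N g -> smooth_upto V N g -> smooth_upto setT N g.
Proof. by move=> WV gW gV s hs x _; case: (WV x) => [/gW|/gV]; apply. Qed.

Lemma smooth_smooth_upto W N g : smooth g -> smooth_upto W N g.
Proof.
by move=> sg s _ x _; have [c d] := sg s; split => [|i]; [apply: c | apply: d].
Qed.

Lemma smooth_uptoT g : (forall N, smooth_upto setT N g) -> smooth g.
Proof.
by move=> gN s; split => [x | i x]; have [] := gN (size s) s (leqnn _) x I.
Qed.

(* Away from the closed support of [u] the quotient is identically [0], so
   [h] only needs to be invertible on a neighbourhood [W] of that support. *)
Lemma smooth_div_on_supp W u h : open W -> smooth u -> smooth h ->
  (forall x, W x -> h x != 0) -> closure [set x | u x != 0] `<=` W ->
  smooth (u * (fun x => (h x)^-1)).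
Proof.
move=> oW su sh h0 suppW; apply: smooth_uptoT => N.
set V := ~` closure [set x | u x != 0].
have oV : open V by apply: closed_openC; exact: closed_closure.
apply: (@smooth_upto_cover W V).
- move=> x; have [/suppW|] := pselect (closure [set x | u x != 0] x).
    by left.
  by right.
- apply: smooth_uptoM => //; first exact: smooth_smooth_upto.
  by apply: smooth_uptoV => // M; apply: smooth_smooth_upto.
- apply: (@eq_smooth_upto _ _ _ (cst 0)); [done| |exact: smooth_upto_cst].
  move=> x Vx; rewrite !fctE.
  have [-> | ux] := eqVneq (u x) 0; first by rewrite mul0r.
  by case: Vx; apply: subset_closure.
Qed.

End SmoothUpto.

Local Open Scope complex_scope.

Section TestFunctions.
Variables (R : realType) (n : nat).
Implicit Types (phi : 'rV[R]_n -> R[i]) (h : 'rV[R]_n -> R).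

Lemma fsupp_sub_nonzero phi h : fsupp phi `<=` [set x | h x != 0] ->
  forall x, h x = 0 -> phi x = 0.
Proof.
move=> supp x hx0; apply/eqP; apply: contraT => phix.
have := supp x (@subset_closure _ [set x | phi x != 0] x phix).
by rewrite /= hx0 eqxx.
Qed.

Lemma open_nonzero h : smooth h -> open [set x | h x != 0].
Proof. by move=> sh; apply: (continuousP h).1 (sh [::]).1 _ (@open_neq _ 0). Qed.

Lemma test_fun_div phi h : test_fun phi -> smooth h ->
  fsupp phi `<=` [set x | h x != 0] ->
  test_fun (fun x => phi x * ((h x)^-1)%:C).
Proof.
move=> [sRe [sIm cpt]] sh supp.
have supp_sub (g : 'rV[R]_n -> R) : (forall x, phi x = 0 -> g x = 0) ->
    closure [set x | g x != 0] `<=` [set x | h x != 0].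
  move=> g0; apply: subset_trans supp; apply: closureS => x.
  by apply: contra_neq; apply: g0.
have smooth_part (part : R[i] -> R) : smooth (fun x => part (phi x)) ->
    (forall z c, part (z * c%:C) = part z * c) -> part 0 = 0 ->
    smooth (fun x => part (phi x * ((h x)^-1)%:C)).
  move=> sp partM part0; under eq_fun do rewrite partM.
  apply: (smooth_div_on_supp (open_nonzero sh)) => //.
  by apply: supp_sub => x ->.
split; [|split].
- by apply: smooth_part => // -[a b] c /=; ring.
- by apply: smooth_part => // -[a b] c /=; ring.
- apply: (subclosed_compact _ cpt); first exact: closed_closure.
  by apply: closureS => x; apply: contra_neq => ->; rewrite mul0r.
Qed.

End TestFunctions.

Section Support.
Variables (R : realType) (n : nat) (X : completeNormedModType R[i]).
Implicit Types (A : ('rV[R]_n -> R[i]) -> X -> X) (h : 'rV[R]_n -> R).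

Lemma hsupport_sub_zeros A h : smooth h ->
  (forall phi y, test_fun phi -> A (fun x => (h x)%:C * phi x) y = 0) ->
  hsupport A `<=` h @^-1` [set 0].
Proof.
move=> sh hA0 p Ap; apply/eqP; apply: contraT => hp.
have [phi [tphi [supp [y Aphi]]]] := Ap _ (open_nonzero sh) hp.
case/negP: Aphi; apply/eqP.
rewrite -(hA0 _ y (test_fun_div tphi sh supp)); congr (A _ y).
apply: funext => x; have [hx0|hx] := eqVneq (h x) 0.
  by rewrite (fsupp_sub_nonzero supp hx0) !(mul0r, mulr0).
by rewrite mulrCA -rmorphM mulfV // mulr1.
Qed.

End Support.

Theorem corollary5p5 (R : realType) (n m : nat) (X : completeNormedModType R[i])
  (A : ('rV[R]_n -> R[i]) -> X -> X) (f : 'rV[R]_n -> 'rV[R]_m) :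
  hyperoperator A -> smooth_map f ->
  (forall (phi : 'rV[R]_n -> R[i]) (y : X), test_fun phi ->
     forall i : 'I_m, A (fun x => (f x 0 i)%:C * phi x) y = 0) ->
  hsupport A `<=` f @^-1` [set 0].
Proof.
move=> _ sf fA0 p Ap; apply/rowP => j; rewrite mxE.
apply: (@hsupport_sub_zeros _ _ _ A (fun x => f x 0 j)) => //.
by move=> phi y tphi; apply: fA0.
Qed.
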